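(* For any real $\lambda$ and $\theta$ and any $0<x<\pi/2$, \[ \left|\lambda\int_0^x\frac{\cos(\lambda y-\theta)}{\cos y}\,dy-\sin\theta\right|<\frac{1}{\cos x}. \] *)

From Stdlib Require Import Reals.
From Coquelicot Require Import Coquelicot.

From Stdlib Require Import Reals Lra Psatz.
From Coquelicot Require Import Coquelicot.
Open Scope R_scope.

(* The integrand is the real part, on the real axis, of
   F(z) = e^{i(lambda z - theta)} / cos z, holomorphic on the strip |Re z| < pi/2.
   For lambda >= 0, F decays in the upper half plane, and Cauchy's theorem on the
   rectangle [0, x] x [0, S] replaces the bottom edge by the three other ones.
   On the left edge Im F(i s) = - sin theta e^{-lambda s} / cosh s, which cancels
   sin theta up to (1 - lambda X) sin theta with X = int_0^S e^{-lambda s} / cosh s;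
   the right edge is at most lambda X / cos x because |cos (x + i s)| >= cos x cosh s,
   and the top edge is O(e^{-lambda S} / cosh S). Since lambda X <= 1 - e^{-lambda S},
   the three contributions add up to less than 1 / cos x once S is large.
   The case lambda < 0 follows from the symmetry (lambda, theta) -> (-lambda, -theta). *)

Lemma continuity_2d_pt_swap f x y :
  continuity_2d_pt f x y -> continuity_2d_pt (fun v u => f u v) y x.
Proof.
  intros Hf eps; destruct (Hf eps) as [d Hd].
  exists d; intros v u Hv Hu; exact (Hd u v Hu Hv).
Qed.

Lemma continuity_2d_pt_continuous_l f x y :
  continuity_2d_pt f x y -> continuous (fun u => f u y) x.
Proof.
  intros Hf; apply continuity_pt_filterlim; intros eps Heps.
  destruct (Hf (mkposreal eps Heps)) as [d Hd].
  exists d; split; [apply cond_pos |].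
  intros u [_ Hu]; apply (Hd u y Hu).
  rewrite Rminus_diag, Rabs_R0; apply cond_pos.
Qed.

Lemma continuity_2d_pt_continuous_r f x y :
  continuity_2d_pt f x y -> continuous (fun v => f x v) y.
Proof.
  intros Hf; exact (continuity_2d_pt_continuous_l _ _ _ (continuity_2d_pt_swap _ _ _ Hf)).
Qed.

Lemma ex_RInt_continuous_R (f : R -> R) a b : (forall z, continuous f z) -> ex_RInt f a b.
Proof. intros Hf; apply (@ex_RInt_continuous R_CompleteNormedModule); intros z _; apply Hf. Qed.

Section RectangleContour.

(* [u t s + i v t s] is a holomorphic function of [z = t + i s] on the strip
   [c < t < d], and [w t s] is the imaginary part of its derivative; the
   hypotheses on the derivatives are the Cauchy-Riemann equations in that form. *)
Variables (u v w : R -> R -> R) (c d a b : R).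
Hypotheses (Hca : c < a) (Hab : a <= b) (Hbd : b < d).
Hypothesis u_cont : forall t s, c < t < d -> continuity_2d_pt u t s.
Hypothesis v_cont : forall t s, c < t < d -> continuity_2d_pt v t s.
Hypothesis w_cont : forall t s, c < t < d -> continuity_2d_pt w t s.
Hypothesis u_derive : forall t s, c < t < d -> is_derive (u t) s (- w t s).
Hypothesis v_derive : forall t s, c < t < d -> is_derive (fun t => v t s) t (w t s).

Lemma segment_in_strip t : Rmin a b <= t <= Rmax a b -> c < t < d.
Proof. rewrite Rmin_left, Rmax_right by lra; lra. Qed.

Lemma ex_RInt_horizontal (f : R -> R -> R) s :
  (forall t, c < t < d -> continuity_2d_pt f t s) -> ex_RInt (fun t => f t s) a b.
Proof.
  intros Hf; apply (@ex_RInt_continuous R_CompleteNormedModule); intros t Ht.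
  apply continuity_2d_pt_continuous_l, Hf, segment_in_strip, Ht.
Qed.

Lemma RInt_w_horizontal s : RInt (fun t => w t s) a b = v b s - v a s.
Proof.
  apply is_RInt_unique, (is_RInt_derive (fun t => v t s)); intros t Ht.
  - apply v_derive, segment_in_strip, Ht.
  - apply continuity_2d_pt_continuous_l, w_cont, segment_in_strip, Ht.
Qed.

Lemma Derive_u_locally t s : c < t < d ->
  locally_2d (fun s' t' => - w t' s' = Derive (fun z => u t' z) s') s t.
Proof.
  intros Ht.
  exists (mkposreal _ (Rmin_pos (t - c) (d - t) ltac:(lra) ltac:(lra))).
  intros s' t' _ Ht'; simpl in Ht'; apply Rabs_def2 in Ht'.
  pose proof (Rmin_l (t - c) (d - t)); pose proof (Rmin_r (t - c) (d - t)).
  symmetry; apply is_derive_unique, u_derive; lra.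
Qed.

Lemma is_derive_RInt_horizontal s :
  is_derive (fun s => RInt (fun t => u t s) a b) s (v a s - v b s).
Proof.
  assert (Hd := is_derive_RInt_param (fun s t => u t s) a b s).
  rewrite (RInt_ext _ (fun t => - w t s)) in Hd.
  2: { intros t Ht; apply is_derive_unique, u_derive, segment_in_strip; lra. }
  rewrite (@RInt_opp R_CompleteNormedModule), RInt_w_horizontal in Hd
    by (apply ex_RInt_horizontal; intros t Ht; apply w_cont, Ht).
  replace (v a s - v b s) with (opp (v b s - v a s)) by (unfold opp; simpl; ring).
  apply Hd.
  - apply filter_forall; intros s' t Ht.
    eexists; apply u_derive, segment_in_strip, Ht.
  - intros t Ht; apply segment_in_strip in Ht.
    apply (continuity_2d_pt_ext_loc _ _ _ _ (Derive_u_locally t s Ht)).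
    apply continuity_2d_pt_opp, (continuity_2d_pt_swap w), w_cont, Ht.
  - apply filter_forall; intros s'; apply ex_RInt_horizontal; intros t Ht; apply u_cont, Ht.
Qed.

Theorem RInt_rectangle_contour s0 s1 :
  RInt (fun t => u t s1) a b - RInt (fun t => u t s0) a b =
  RInt (fun s => v a s - v b s) s0 s1.
Proof.
  symmetry; apply is_RInt_unique.
  apply (is_RInt_derive (fun s => RInt (fun t => u t s) a b)); intros s _.
  - apply is_derive_RInt_horizontal.
  - apply (@continuous_minus R_UniformSpace R_AbsRing R_NormedModule
      (fun s => v a s) (fun s => v b s));
      apply continuity_2d_pt_continuous_r, v_cont; lra.
Qed.

End RectangleContour.

Lemma cosh_pos s : 0 < cosh s.
Proof. unfold cosh; pose proof (exp_pos s); pose proof (exp_pos (- s)); lra. Qed.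

Lemma cosh_ge_1 s : 1 <= cosh s.
Proof. unfold cosh; pose proof (exp_ineq1_le s); pose proof (exp_ineq1_le (- s)); lra. Qed.

Lemma cosh_unbounded M : exists S, 0 <= S /\ M < cosh S.
Proof.
  exists (2 * Rabs M); split; [pose proof (Rabs_pos M); lra |].
  unfold cosh; pose proof (exp_ineq1_le (2 * Rabs M)).
  pose proof (exp_pos (- (2 * Rabs M))); pose proof (Rle_abs M); lra.
Qed.

Lemma cos_pos_strip t : - (PI / 2) < t < PI / 2 -> 0 < cos t.
Proof. intros Ht; apply cos_gt_0; lra. Qed.

Definition ccos_re t s := cos t * cosh s.
Definition ccos_im t s := - (sin t * sinh s).
Definition csin_re t s := sin t * cosh s.
Definition csin_im t s := cos t * sinh s.
Definition ccos_norm2 t s := ccos_re t s ^ 2 + ccos_im t s ^ 2.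
Definition ctan_re t s :=
  (csin_re t s * ccos_re t s + csin_im t s * ccos_im t s) / ccos_norm2 t s.
Definition ctan_im t s :=
  (csin_im t s * ccos_re t s - csin_re t s * ccos_im t s) / ccos_norm2 t s.

Lemma ccos_norm2_pos t s : 0 < cos t -> 0 < ccos_norm2 t s.
Proof.
  intros Ht; unfold ccos_norm2, ccos_re.
  pose proof (Rmult_lt_0_compat _ _ Ht (cosh_pos s)); nra.
Qed.

Lemma ccos_norm2_neq0_strip t s : - (PI / 2) < t < PI / 2 -> ccos_norm2 t s <> 0.
Proof. intros Ht; apply Rgt_not_eq, ccos_norm2_pos, cos_pos_strip, Ht. Qed.

Lemma Rabs_div_norm2_le n A B :
  n ^ 2 <= A ^ 2 + B ^ 2 -> A <> 0 -> Rabs (n / (A ^ 2 + B ^ 2)) <= / Rabs A.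
Proof.
  intros Hn HA.
  assert (HA2 : 0 < A ^ 2) by (apply pow2_gt_0; exact HA).
  assert (HAabs : 0 < Rabs A) by (apply Rabs_pos_lt; exact HA).
  unfold Rdiv; rewrite Rabs_mult, (Rabs_inv (_ + _)), (Rabs_pos_eq (_ + _)) by nra.
  apply (Rmult_le_reg_r (Rabs A * (A ^ 2 + B ^ 2))); [nra |].
  replace (Rabs n * / (A ^ 2 + B ^ 2) * (Rabs A * (A ^ 2 + B ^ 2)))
    with (Rabs n * Rabs A) by (field; nra).
  replace (/ Rabs A * (Rabs A * (A ^ 2 + B ^ 2))) with (A ^ 2 + B ^ 2) by (field; lra).
  assert (Hsq : (Rabs n * Rabs A) ^ 2 <= (A ^ 2 + B ^ 2) ^ 2).
  { rewrite Rpow_mult_distr, <- !Rsqr_pow2, <- !Rsqr_abs, !Rsqr_pow2; nra. }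
  pose proof (Rabs_pos n); nra.
Qed.

Ltac continuity_2d :=
  repeat first
    [ assumption
    | apply continuity_2d_pt_id1 | apply continuity_2d_pt_id2
    | apply continuity_2d_pt_const | apply continuity_2d_pt_opp
    | apply continuity_2d_pt_plus | apply continuity_2d_pt_minus
    | apply continuity_2d_pt_mult | apply continuity_2d_pt_inv
    | apply (continuity_1d_2d_pt_comp cos); [apply continuity_cos |]
    | apply (continuity_1d_2d_pt_comp sin); [apply continuity_sin |]
    | apply (continuity_1d_2d_pt_comp exp);
        [apply derivable_continuous_pt, derivable_pt_exp |]
    | apply (continuity_1d_2d_pt_comp cosh);
        [apply derivable_continuous_pt, derivable_pt_cosh |]
    | apply (continuity_1d_2d_pt_comp sinh);
        [apply derivable_continuous_pt, derivable_pt_sinh |] ].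

Lemma continuous_exp_decay lambda s : continuous (fun s => exp (- (lambda * s))) s.
Proof. apply (@ex_derive_continuous R_AbsRing R_NormedModule); auto_derive; exact I. Qed.

Lemma continuous_exp_decay_div_cosh lambda s :
  continuous (fun s => exp (- (lambda * s)) / cosh s) s.
Proof.
  apply (@ex_derive_continuous R_AbsRing R_NormedModule).
  pose proof (cosh_pos s); unfold cosh in *; auto_derive; lra.
Qed.

Lemma RInt_exp_decay lambda S :
  lambda * RInt (fun s => exp (- (lambda * s))) 0 S = 1 - exp (- (lambda * S)).
Proof.
  transitivity (RInt (fun s => lambda * exp (- (lambda * s))) 0 S).
  { symmetry; apply (@RInt_scal R_CompleteNormedModule), ex_RInt_continuous_R.
    apply continuous_exp_decay. }
  apply is_RInt_unique.
  replace (1 - exp (- (lambda * S)))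
    with (minus (- exp (- (lambda * S))) (- exp (- (lambda * 0))))
    by (rewrite Rmult_0_r, Ropp_0, exp_0; unfold minus, plus, opp; simpl; ring).
  apply (is_RInt_derive (fun s => - exp (- (lambda * s)))); intros s _.
  - auto_derive; [exact I | ring].
  - apply (@ex_derive_continuous R_AbsRing R_NormedModule); auto_derive; exact I.
Qed.

Section Integrand.

Variables lambda theta : R.

Definition phase t := lambda * t - theta.

(* F(z) = e^{i (lambda z - theta)} / cos z at z = t + i s, and the imaginary part
   of F'(z) = F(z) (i lambda + tan z). *)
Definition F_re t s := exp (- (lambda * s)) *
  ((cos (phase t) * ccos_re t s + sin (phase t) * ccos_im t s) / ccos_norm2 t s).
Definition F_im t s := exp (- (lambda * s)) *
  ((sin (phase t) * ccos_re t s - cos (phase t) * ccos_im t s) / ccos_norm2 t s).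
Definition F'_im t s := F_re t s * (lambda + ctan_im t s) + F_im t s * ctan_re t s.

Ltac unfold_integrand :=
  unfold F'_im, F_re, F_im, ctan_re, ctan_im, ccos_norm2, ccos_re, ccos_im,
    csin_re, csin_im, phase.

Lemma is_derive_F_re t s : ccos_norm2 t s <> 0 -> is_derive (F_re t) s (- F'_im t s).
Proof.
  unfold_integrand; unfold cosh, sinh, Rminus; intros H.
  auto_derive; [contradict H; nra |]; field; contradict H; nra.
Qed.

Lemma is_derive_F_im t s :
  ccos_norm2 t s <> 0 -> is_derive (fun t => F_im t s) t (F'_im t s).
Proof.
  unfold_integrand; unfold cosh, sinh, Rminus; intros H.
  auto_derive; [contradict H; nra |]; field; contradict H; nra.
Qed.

Lemma continuity_2d_pt_F_re t s : ccos_norm2 t s <> 0 -> continuity_2d_pt F_re t s.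
Proof. intros H; unfold_integrand; continuity_2d. Qed.

Lemma continuity_2d_pt_F_im t s : ccos_norm2 t s <> 0 -> continuity_2d_pt F_im t s.
Proof. intros H; unfold_integrand; continuity_2d. Qed.

Lemma continuity_2d_pt_F'_im t s : ccos_norm2 t s <> 0 -> continuity_2d_pt F'_im t s.
Proof. intros H; unfold_integrand; continuity_2d. Qed.

Lemma Rabs_exp_decay_div_ccos_le t s n :
  0 < cos t -> n ^ 2 <= ccos_norm2 t s ->
  Rabs (exp (- (lambda * s)) * (n / ccos_norm2 t s)) <=
  exp (- (lambda * s)) / (cos t * cosh s).
Proof.
  intros Ht Hn.
  assert (Hre : 0 < ccos_re t s) by exact (Rmult_lt_0_compat _ _ Ht (cosh_pos s)).
  rewrite Rabs_mult, Rabs_pos_eq by (left; apply exp_pos).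
  apply Rmult_le_compat_l; [left; apply exp_pos |].
  replace (/ (cos t * cosh s)) with (/ Rabs (ccos_re t s))
    by (rewrite Rabs_pos_eq by lra; reflexivity).
  apply Rabs_div_norm2_le; [exact Hn | lra].
Qed.

Lemma Rabs_F_re_le t s :
  0 < cos t -> Rabs (F_re t s) <= exp (- (lambda * s)) / (cos t * cosh s).
Proof.
  intros Ht; apply Rabs_exp_decay_div_ccos_le; [exact Ht |].
  pose proof (sin2_cos2 (phase t)); unfold Rsqr, ccos_norm2 in *.
  set (p := cos (phase t)) in *; set (q := sin (phase t)) in *.
  pose proof (pow2_ge_0 (p * ccos_im t s - q * ccos_re t s)); nra.
Qed.

Lemma Rabs_F_im_le t s :
  0 < cos t -> Rabs (F_im t s) <= exp (- (lambda * s)) / (cos t * cosh s).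
Proof.
  intros Ht; apply Rabs_exp_decay_div_ccos_le; [exact Ht |].
  pose proof (sin2_cos2 (phase t)); unfold Rsqr, ccos_norm2 in *.
  set (p := cos (phase t)) in *; set (q := sin (phase t)) in *.
  pose proof (pow2_ge_0 (p * ccos_re t s + q * ccos_im t s)); nra.
Qed.

Lemma F_re_real_axis t : cos t <> 0 -> F_re t 0 = cos (lambda * t - theta) / cos t.
Proof.
  intros Ht; unfold F_re, ccos_norm2, ccos_re, ccos_im, phase.
  rewrite Rmult_0_r, Ropp_0, exp_0, cosh_0, sinh_0; field; exact Ht.
Qed.

Lemma F_im_imaginary_axis s :
  F_im 0 s = - sin theta * (exp (- (lambda * s)) / cosh s).
Proof.
  pose proof (cosh_pos s).
  unfold F_im, ccos_norm2, ccos_re, ccos_im, phase.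
  rewrite cos_0, sin_0, Rmult_0_r, Rminus_0_l, sin_neg; field; lra.
Qed.

Section Estimates.

Variable x : R.
Hypotheses (Hl : 0 <= lambda) (Hx : 0 < x < PI / 2).

Lemma cos_in_unit_interval : 0 < cos x < 1.
Proof.
  pose proof PI_RGT_0; split; [apply cos_pos_strip; lra |].
  rewrite <- cos_0; apply cos_decreasing_1; lra.
Qed.

Lemma RInt_F_re_shift S :
  RInt (fun t => F_re t S) 0 x - RInt (fun t => F_re t 0) 0 x =
  RInt (fun s => F_im 0 s - F_im x s) 0 S.
Proof.
  pose proof PI_RGT_0.
  apply (RInt_rectangle_contour F_re F_im F'_im (- (PI / 2)) (PI / 2)); try lra;
    intros t s Ht; pose proof (ccos_norm2_neq0_strip t s Ht).
  - apply continuity_2d_pt_F_re; assumption.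
  - apply continuity_2d_pt_F_im; assumption.
  - apply continuity_2d_pt_F'_im; assumption.
  - apply is_derive_F_re; assumption.
  - apply is_derive_F_im; assumption.
Qed.

Lemma continuous_F_im_vertical t s : 0 <= t <= x -> continuous (fun s => F_im t s) s.
Proof.
  intros Ht; pose proof PI_RGT_0.
  apply continuity_2d_pt_continuous_r, continuity_2d_pt_F_im, ccos_norm2_neq0_strip; lra.
Qed.

Lemma top_edge_bound S :
  Rabs (RInt (fun t => F_re t S) 0 x) <= x * (exp (- (lambda * S)) / (cos x * cosh S)).
Proof.
  pose proof PI_RGT_0; pose proof (cosh_pos S); pose proof cos_in_unit_interval.
  rewrite <- (Rminus_0_r x) at 2.
  apply abs_RInt_le_const; [lra | |].
  - apply (@ex_RInt_continuous R_CompleteNormedModule); intros t Ht.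
    rewrite Rmin_left, Rmax_right in Ht by lra.
    apply continuity_2d_pt_continuous_l, continuity_2d_pt_F_re, ccos_norm2_neq0_strip; lra.
  - intros t Ht.
    assert (Hct : cos x <= cos t).
    { destruct (Req_dec t x) as [-> | Htx]; [lra |].
      left; apply cos_decreasing_1; lra. }
    apply Rle_trans with (exp (- (lambda * S)) / (cos t * cosh S)).
    + apply Rabs_F_re_le; lra.
    + apply Rmult_le_compat_l; [left; apply exp_pos |].
      apply Rinv_le_contravar; [apply Rmult_lt_0_compat |]; nra.
Qed.

Lemma top_edge_small S :
  lambda * x < (1 - cos x) * cosh S ->
  Rabs (lambda * RInt (fun t => F_re t S) 0 x) < (1 - cos x) * exp (- (lambda * S)) / cos x.
Proof.
  intros HS; pose proof (cosh_pos S); pose proof cos_in_unit_interval.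
  pose proof (exp_pos (- (lambda * S))).
  apply Rle_lt_trans with (lambda * x * exp (- (lambda * S)) / (cos x * cosh S)).
  - rewrite Rabs_mult, (Rabs_pos_eq lambda Hl).
    apply Rle_trans with (lambda * (x * (exp (- (lambda * S)) / (cos x * cosh S)))).
    + apply Rmult_le_compat_l; [exact Hl | apply top_edge_bound].
    + right; field; lra.
  - replace ((1 - cos x) * exp (- (lambda * S)) / cos x)
      with ((1 - cos x) * cosh S * exp (- (lambda * S)) / (cos x * cosh S)) by (field; lra).
    apply Rmult_lt_compat_r; [apply Rinv_0_lt_compat; nra |].
    apply Rmult_lt_compat_r; assumption.
Qed.

Lemma right_edge_bound S : 0 <= S ->
  Rabs (RInt (fun s => F_im x s) 0 S) <=
  / cos x * RInt (fun s => exp (- (lambda * s)) / cosh s) 0 S.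
Proof.
  intros HS; pose proof cos_in_unit_interval.
  apply Rle_trans with (RInt (fun s => Rabs (F_im x s)) 0 S).
  - apply abs_RInt_le; [exact HS |].
    apply ex_RInt_continuous_R; intros s; apply continuous_F_im_vertical; lra.
  - rewrite <- (@RInt_scal R_CompleteNormedModule)
      by (apply ex_RInt_continuous_R, continuous_exp_decay_div_cosh).
    apply RInt_le; [exact HS | | |].
    + apply ex_RInt_continuous_R; intros s.
      apply (@continuous_comp R_UniformSpace R_UniformSpace R_UniformSpace
        (fun s => F_im x s) Rabs), continuous_Rabs.
      apply continuous_F_im_vertical; lra.
    + apply (@ex_RInt_scal R_CompleteNormedModule),
        ex_RInt_continuous_R, continuous_exp_decay_div_cosh.
    + intros s _; pose proof (cosh_pos s).
      apply Rle_trans with (exp (- (lambda * s)) / (cos x * cosh s)).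
      * apply Rabs_F_im_le; lra.
      * right; change (scal (/ cos x) (exp (- (lambda * s)) / cosh s))
          with (/ cos x * (exp (- (lambda * s)) / cosh s)).
        field; lra.
Qed.

Lemma left_edge_value S :
  RInt (fun s => F_im 0 s) 0 S =
  - sin theta * RInt (fun s => exp (- (lambda * s)) / cosh s) 0 S.
Proof.
  rewrite <- (@RInt_scal R_CompleteNormedModule)
    by (apply ex_RInt_continuous_R, continuous_exp_decay_div_cosh).
  apply RInt_ext; intros s _; apply F_im_imaginary_axis.
Qed.

Lemma decay_integral_bound S : 0 <= S ->
  lambda * RInt (fun s => exp (- (lambda * s)) / cosh s) 0 S <= 1 - exp (- (lambda * S)).
Proof.
  intros HS; rewrite <- (RInt_exp_decay lambda S).
  apply Rmult_le_compat_l; [exact Hl |].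
  apply RInt_le; [exact HS | | |];
    try (apply ex_RInt_continuous_R; intros;
         first [apply continuous_exp_decay_div_cosh | apply continuous_exp_decay]).
  intros s _; pose proof (cosh_ge_1 s); pose proof (exp_pos (- (lambda * s))).
  apply Rmult_le_reg_r with (cosh s); [lra |].
  unfold Rdiv; rewrite Rmult_assoc, Rinv_l by lra; nra.
Qed.

Lemma error_decomposition S :
  lambda * RInt (fun y => cos (lambda * y - theta) / cos y) 0 x - sin theta =
  lambda * RInt (fun t => F_re t S) 0 x + lambda * RInt (fun s => F_im x s) 0 S +
  sin theta * (lambda * RInt (fun s => exp (- (lambda * s)) / cosh s) 0 S - 1).
Proof.
  pose proof PI_RGT_0.
  rewrite (RInt_ext _ (fun t => F_re t 0)).
  2: { intros t Ht; rewrite Rmin_left, Rmax_right in Ht by lra.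
       symmetry; apply F_re_real_axis, Rgt_not_eq, cos_pos_strip; lra. }
  pose proof (RInt_F_re_shift S) as Hshift.
  rewrite (@RInt_minus R_CompleteNormedModule (fun s => F_im 0 s) (fun s => F_im x s)),
    left_edge_value in Hshift
    by (apply ex_RInt_continuous_R; intros; apply continuous_F_im_vertical; lra).
  change minus with Rminus in Hshift; nra.
Qed.

Lemma error_bound_nonneg_lambda :
  Rabs (lambda * RInt (fun y => cos (lambda * y - theta) / cos y) 0 x - sin theta) < 1 / cos x.
Proof.
  pose proof cos_in_unit_interval.
  destruct (cosh_unbounded (lambda * x / (1 - cos x))) as [S [HS HSbig]].
  apply (Rmult_lt_compat_l (1 - cos x)) in HSbig; [| lra].
  replace ((1 - cos x) * (lambda * x / (1 - cos x))) with (lambda * x) in HSbig by (field; lra).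
  rewrite (error_decomposition S).
  pose proof (top_edge_small S HSbig) as Htop.
  pose proof (right_edge_bound S HS) as Hright.
  pose proof (decay_integral_bound S HS) as Hdecay.
  set (Top := RInt (fun t => F_re t S) 0 x) in *.
  set (Right := RInt (fun s => F_im x s) 0 S) in *.
  set (X := RInt (fun s => exp (- (lambda * s)) / cosh s) 0 S) in *.
  set (e := exp (- (lambda * S))) in *.
  assert (He : 0 < e) by apply exp_pos.
  assert (HR : Rabs (lambda * Right) <= lambda * X / cos x).
  { rewrite Rabs_mult, (Rabs_pos_eq lambda Hl).
    apply Rle_trans with (lambda * (/ cos x * X)); [nra | right; field; lra]. }
  assert (Hsin : Rabs (sin theta * (lambda * X - 1)) <= 1 - lambda * X).
  { rewrite Rabs_mult, (Rabs_left1 (lambda * X - 1)) by lra.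
    assert (Rabs (sin theta) <= 1) by (apply Rabs_le, SIN_bound).
    pose proof (Rabs_pos (sin theta)); nra. }
  assert (Hsum : (1 - cos x) * e / cos x + lambda * X / cos x + (1 - lambda * X) <= 1 / cos x).
  { apply Rmult_le_reg_r with (cos x); [lra |].
    replace (((1 - cos x) * e / cos x + lambda * X / cos x + (1 - lambda * X)) * cos x)
      with ((1 - cos x) * e + lambda * X + (1 - lambda * X) * cos x) by (field; lra).
    replace (1 / cos x * cos x) with 1 by (field; lra).
    nra. }
  pose proof (Rabs_triang (lambda * Top + lambda * Right) (sin theta * (lambda * X - 1))).
  pose proof (Rabs_triang (lambda * Top) (lambda * Right)).
  lra.
Qed.

End Estimates.

End Integrand.

Lemma error_opp lambda theta x :
  - lambda * RInt (fun y => cos (- lambda * y - - theta) / cos y) 0 x - sin (- theta) =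
  - (lambda * RInt (fun y => cos (lambda * y - theta) / cos y) 0 x - sin theta).
Proof.
  rewrite sin_neg, (RInt_ext _ (fun y => cos (lambda * y - theta) / cos y)); [ring |].
  intros y _; replace (- lambda * y - - theta) with (- (lambda * y - theta)) by ring.
  rewrite cos_neg; reflexivity.
Qed.

Theorem corollary2 (lambda theta x : R) (hx0 : 0 < x) (hx1 : x < PI / 2) :
  Rabs (lambda * RInt (fun y => cos (lambda * y - theta) / cos y) 0 x - sin theta)
  < 1 / cos x.
Proof.
  destruct (Rle_or_lt 0 lambda) as [Hl | Hl].
  - apply error_bound_nonneg_lambda; auto.
  - rewrite <- Rabs_Ropp, <- error_opp.
    apply error_bound_nonneg_lambda; [lra | auto].
Qed.
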